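(* Fix $\varepsilon\in\{1,-1\}$ and $m\in\mathbb{R}$. The momentum map $\Phi : Y\to\mathfrak{sl}(2,\mathbb{C})$, $\Phi(A;h,h_1,h_2)=A\,U(h,h_1,h_2)\,A^{-1}$, is constant along every integral curve of the Euler--Lagrange system $(\mathcal{J},\omega)$.
   Context: For $(h,h_1,h_2)\in\mathbb{R}^3$ put \[ U(h,h_1,h_2)=\begin{pmatrix} i h_1 & 2i\varepsilon\left(h-\varepsilon\left(\frac{m}{3}+i\right)\right)\\[2pt] 2\left(h+\frac{2\varepsilon m}{3}\right)-i\varepsilon\left(h_2-4h^2+\frac{2\varepsilon m h}{3}+\frac{2m^2}{9}-2\right) & -ih_1\end{pmatrix}. \] The momentum space is $Y=\mathrm{SL}(2,\mathbb{C})\times\mathbb{R}^3$ with coordinates $(A;h,h_1,h_2)$. Write the Maurer--Cartan form of $\mathrm{SL}(2,\mathbb{C})$ (pulled back to $Y$) as $A^{-1}dA=\alpha+i\beta$ with $\alpha=\begin{pmatrix}\alpha^1_1&\alpha^1_2\\ \alpha^2_1&-\alpha^1_1\end{pmatrix}$, $\beta=\begin{pmatrix}\beta^1_1&\beta^1_2\\ \beta^2_1&-\beta^1_1\end{pmatrix}$ real-valued. Let $\omega=\beta^2_1$. The Euler--Lagrange system $(\mathcal{J},\omega)$ is the Pfaffian system on $Y$ generated by the 1-forms $\beta^1_1$, $\beta^1_2$, $\alpha^1_1$, $\alpha^1_2-\varepsilon\omega$, $\alpha^2_1-(2\varepsilon h+\frac{m}{3})\omega$, $dh-h_1\omega$,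 $dh_1-h_2\omega$, $dh_2-12hh_1\omega$, with independence condition $\omega\neq0$. An integral curve is a smooth curve $y:I\to Y$ on an interval $I$ on which all these generators pull back to zero and $y^\ast\omega$ vanishes nowhere. *)

From Stdlib Require Import Reals.
From Coquelicot Require Import Coquelicot.

Open Scope R_scope.

Record M2 := mkM2 { e11 : C; e12 : C; e21 : C; e22 : C }.

Definition M2mul (A B : M2) : M2 :=
  mkM2 (Cplus (Cmult (e11 A) (e11 B)) (Cmult (e12 A) (e21 B)))
       (Cplus (Cmult (e11 A) (e12 B)) (Cmult (e12 A) (e22 B)))
       (Cplus (Cmult (e21 A) (e11 B)) (Cmult (e22 A) (e21 B)))
       (Cplus (Cmult (e21 A) (e12 B)) (Cmult (e22 A) (e22 B))).

Definition M2det (A : M2) : C :=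
  Cminus (Cmult (e11 A) (e22 A)) (Cmult (e12 A) (e21 A)).

Definition M2inv (A : M2) : M2 :=
  let d := Cinv (M2det A) in
  mkM2 (Cmult d (e22 A)) (Cmult d (Copp (e12 A)))
       (Cmult d (Copp (e21 A))) (Cmult d (e11 A)).

Definition Umat (eps m h h1 h2 : R) : M2 :=
  mkM2 (Cmult Ci (RtoC h1))
       (Cmult (Cmult (RtoC 2) (Cmult Ci (RtoC eps)))
              (Cminus (RtoC h) (Cmult (RtoC eps) (Cplus (RtoC (m / 3)) Ci))))
       (Cminus (RtoC (2 * (h + 2 * eps * m / 3)))
               (Cmult (Cmult Ci (RtoC eps))
                      (RtoC (h2 - 4 * h ^ 2 + 2 * eps * m * h / 3
                             + 2 * m ^ 2 / 9 - 2))))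
       (Copp (Cmult Ci (RtoC h1))).

Definition Phi (eps m : R) (A : M2) (h h1 h2 : R) : M2 :=
  M2mul (M2mul A (Umat eps m h h1 h2)) (M2inv A).

Definition in_I (a b : Rbar) (t : R) : Prop := Rbar_lt a t /\ Rbar_lt t b.

Definition smooth_on (a b : Rbar) (f : R -> R) : Prop :=
  forall (n : nat) (t : R), in_I a b t -> ex_derive (Derive_n f n) t.

Definition smooth_M2_on (a b : Rbar) (A : R -> M2) : Prop :=
  smooth_on a b (fun t => fst (e11 (A t))) /\ smooth_on a b (fun t => snd (e11 (A t))) /\
  smooth_on a b (fun t => fst (e12 (A t))) /\ smooth_on a b (fun t => snd (e12 (A t))) /\
  smooth_on a b (fun t => fst (e21 (A t))) /\ smooth_on a b (fun t => snd (e21 (A t))) /\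
  smooth_on a b (fun t => fst (e22 (A t))) /\ smooth_on a b (fun t => snd (e22 (A t))).

Definition DeriveC (f : R -> C) (t : R) : C :=
  (Derive (fun s => fst (f s)) t, Derive (fun s => snd (f s)) t).

Definition DeriveM2 (A : R -> M2) (t : R) : M2 :=
  mkM2 (DeriveC (fun s => e11 (A s)) t) (DeriveC (fun s => e12 (A s)) t)
       (DeriveC (fun s => e21 (A s)) t) (DeriveC (fun s => e22 (A s)) t).

(** Pullback of the Maurer-Cartan form A^{-1} dA along the curve,
    evaluated on d/dt:  A(t)^{-1} A'(t) = alpha + i beta. *)
Definition MC (A : R -> M2) (t : R) : M2 := M2mul (M2inv (A t)) (DeriveM2 A t).

(** Integral curve of the Euler-Lagrange system (J, omega) on the interval (a,b),
    y(t) = (A t; h t, h1 t, h2 t), with omega = beta^2_1. *)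
Definition integral_curve (eps m : R) (a b : Rbar)
    (A : R -> M2) (h h1 h2 : R -> R) : Prop :=
  smooth_M2_on a b A /\ smooth_on a b h /\ smooth_on a b h1 /\ smooth_on a b h2 /\
  forall t, in_I a b t ->
    let W := MC A t in
    let alpha11 := fst (e11 W) in let beta11 := snd (e11 W) in
    let alpha12 := fst (e12 W) in let beta12 := snd (e12 W) in
    let alpha21 := fst (e21 W) in let omega := snd (e21 W) in
    M2det (A t) = RtoC 1 /\
    beta11 = 0 /\
    beta12 = 0 /\
    alpha11 = 0 /\
    alpha12 - eps * omega = 0 /\
    alpha21 - (2 * eps * h t + m / 3) * omega = 0 /\
    Derive h t - h1 t * omega = 0 /\
    Derive h1 t - h2 t * omega = 0 /\
    Derive h2 t - 12 * h t * h1 t * omega = 0 /\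
    omega <> 0.

(** Along an integral curve, [det A = 1] makes [A^-1] the adjugate of [A], which is linear
    in [A], so [Phi = A U adj A] can be differentiated entrywise.  The structure equations
    say that [W = A^-1 A'] is the explicit matrix [Wmat] (its trace vanishes because
    [det A] is constant), and the equations for [h, h1, h2] are exactly the Lax equation
    [U' = [U, W]].  Hence [(A U A^-1)' = A (W U + U' - U W) A^-1 = 0], and [Phi] is
    constant on the interval by the mean value theorem. *)

From Stdlib Require Import Reals Lra.
From Coquelicot Require Import Coquelicot.

Definition is_deriveC (f : R -> C) (t : R) (l : C) : Prop :=
  is_derive (fun s => fst (f s)) t (fst l) /\ is_derive (fun s => snd (f s)) t (snd l).

Lemma is_deriveC_eq (f : R -> C) (t : R) (l l' : C) :
  is_deriveC f t l -> l = l' -> is_deriveC f t l'.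
Proof. now intros H <-. Qed.

Lemma is_deriveC_plus (f g : R -> C) (t : R) (df dg : C) :
  is_deriveC f t df -> is_deriveC g t dg ->
  is_deriveC (fun s => f s + g s)%C t (df + dg)%C.
Proof.
  intros [Hf1 Hf2] [Hg1 Hg2].
  split; [exact (is_derive_plus _ _ _ _ _ Hf1 Hg1) | exact (is_derive_plus _ _ _ _ _ Hf2 Hg2)].
Qed.

Lemma is_deriveC_opp (f : R -> C) (t : R) (df : C) :
  is_deriveC f t df -> is_deriveC (fun s => - f s)%C t (- df)%C.
Proof.
  intros [Hf1 Hf2].
  split; [exact (is_derive_opp _ _ _ Hf1) | exact (is_derive_opp _ _ _ Hf2)].
Qed.

Lemma is_deriveC_mult (f g : R -> C) (t : R) (df dg : C) :
  is_deriveC f t df -> is_deriveC g t dg ->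
  is_deriveC (fun s => f s * g s)%C t (df * g t + f t * dg)%C.
Proof.
  intros [Hf1 Hf2] [Hg1 Hg2].
  pose proof (fun u v du dv Hu Hv => is_derive_mult u v t du dv Hu Hv Rmult_comm) as Hmult.
  split.
  - replace (fst _) with ((fst df * fst (g t) + fst (f t) * fst dg)
                          - (snd df * snd (g t) + snd (f t) * snd dg)) by (simpl; ring).
    exact (is_derive_minus _ _ _ _ _ (Hmult _ _ _ _ Hf1 Hg1) (Hmult _ _ _ _ Hf2 Hg2)).
  - replace (snd _) with ((fst df * snd (g t) + fst (f t) * snd dg)
                          + (snd df * fst (g t) + snd (f t) * fst dg)) by (simpl; ring).
    exact (is_derive_plus _ _ _ _ _ (Hmult _ _ _ _ Hf1 Hg2) (Hmult _ _ _ _ Hf2 Hg1)).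
Qed.

Section MatrixAlgebra.
Local Open Scope C_scope.

Definition M2add (X Y : M2) : M2 :=
  mkM2 (e11 X + e11 Y) (e12 X + e12 Y) (e21 X + e21 Y) (e22 X + e22 Y).

Definition M2opp (X : M2) : M2 := mkM2 (- e11 X) (- e12 X) (- e21 X) (- e22 X).

Definition M2zero : M2 := mkM2 0 0 0 0.

Definition M2lie (X Y : M2) : M2 := M2add (M2mul X Y) (M2opp (M2mul Y X)).

Definition adjM (X : M2) : M2 := mkM2 (e22 X) (- e12 X) (- e21 X) (e11 X).

Definition M2tr (X : M2) : C := e11 X + e22 X.

Lemma M2inv_det1 (X : M2) : M2det X = 1 -> M2inv X = adjM X.
Proof.
  intros H. unfold M2inv. rewrite H.
  replace (/ 1) with (RtoC 1) by (apply injective_projections; simpl; field).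
  destruct X; unfold adjM; simpl; f_equal; ring.
Qed.

Lemma M2mul_adj_det1 (X Y : M2) : M2det X = 1 -> M2mul X (M2mul (adjM X) Y) = Y.
Proof.
  destruct X as [x11 x12 x21 x22], Y as [y11 y12 y21 y22].
  unfold M2det, M2mul, adjM; simpl; intros H.
  f_equal; match goal with |- _ = ?y =>
    transitivity ((x11 * x22 - x12 * x21) * y); [ring | rewrite H; ring] end.
Qed.

(* The derivative of [X U adj X] when [X' = X W] and [U' = [U, W]]; it vanishes because
   [adj (X W) = adj W adj X = - W adj X] for traceless [W]. *)
Lemma conj_derivative_lax (X U W : M2) : M2tr W = 0 ->
  M2add (M2mul (M2add (M2mul (M2mul X W) U) (M2mul X (M2lie U W))) (adjM X))
        (M2mul (M2mul X U) (adjM (M2mul X W))) = M2zero.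
Proof.
  destruct X, U, W as [w11 w12 w21 w22]; unfold M2tr; simpl; intros Htr.
  assert (w22 = - w11) as -> by (transitivity (w11 + w22 - w11); [ring | rewrite Htr; ring]).
  unfold M2add, M2mul, M2lie, M2opp, adjM, M2zero; simpl; f_equal; ring.
Qed.

Definition Umat_dot (eps m h dh dh1 dh2 : R) : M2 :=
  mkM2 (Ci * RtoC dh1) (Ci * RtoC (2 * eps * dh))
       (RtoC (2 * dh) - Ci * RtoC (eps * (dh2 - 8 * h * dh + 2 * eps * m * dh / 3)))
       (- (Ci * RtoC dh1)).

(* [A^-1 A' = alpha + i beta] as prescribed by the Pfaffian system, with [w] the value of
   [omega]; the (2,2) entry vanishes since [A^-1 dA] is traceless. *)
Definition Wmat (eps m h w : R) : M2 :=
  mkM2 0 (RtoC (eps * w)) (((2 * eps * h + m / 3) * w)%R, w) 0.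

Lemma Umat_dot_lax (eps m h h1 h2 w : R) : (eps = 1 \/ eps = -1)%R ->
  Umat_dot eps m h (h1 * w) (h2 * w) (12 * h * h1 * w) =
  M2lie (Umat eps m h h1 h2) (Wmat eps m h w).
Proof.
  intros Heps. unfold Umat_dot, M2lie, M2add, M2opp, M2mul, Umat, Wmat; simpl.
  f_equal; apply injective_projections; simpl; destruct Heps as [-> | ->]; field.
Qed.

End MatrixAlgebra.

Definition is_deriveM2 (X : R -> M2) (t : R) (D : M2) : Prop :=
  is_deriveC (fun s => e11 (X s)) t (e11 D) /\ is_deriveC (fun s => e12 (X s)) t (e12 D) /\
  is_deriveC (fun s => e21 (X s)) t (e21 D) /\ is_deriveC (fun s => e22 (X s)) t (e22 D).

Lemma is_deriveM2_eq (X : R -> M2) (t : R) (D D' : M2) :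
  is_deriveM2 X t D -> D = D' -> is_deriveM2 X t D'.
Proof. now intros H <-. Qed.

Lemma is_deriveM2_mul (X Y : R -> M2) (t : R) (dX dY : M2) :
  is_deriveM2 X t dX -> is_deriveM2 Y t dY ->
  is_deriveM2 (fun s => M2mul (X s) (Y s)) t (M2add (M2mul dX (Y t)) (M2mul (X t) dY)).
Proof.
  intros (HX11 & HX12 & HX21 & HX22) (HY11 & HY12 & HY21 & HY22).
  split; [| split; [| split]]; (eapply is_deriveC_eq;
    [apply is_deriveC_plus; apply is_deriveC_mult; eassumption
    | cbn [M2add M2mul e11 e12 e21 e22]; ring]).
Qed.

Lemma is_deriveM2_adj (X : R -> M2) (t : R) (dX : M2) :
  is_deriveM2 X t dX -> is_deriveM2 (fun s => adjM (X s)) t (adjM dX).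
Proof.
  intros (H11 & H12 & H21 & H22).
  split; [| split; [| split]]; try apply is_deriveC_opp; assumption.
Qed.

Lemma is_deriveC_det (X : R -> M2) (t : R) (dX : M2) :
  is_deriveM2 X t dX ->
  is_deriveC (fun s => M2det (X s)) t (M2tr (M2mul (adjM (X t)) dX)).
Proof.
  intros (H11 & H12 & H21 & H22).
  eapply is_deriveC_eq.
  - apply is_deriveC_plus; [| apply is_deriveC_opp]; apply is_deriveC_mult; eassumption.
  - unfold M2tr; cbn [M2mul adjM e11 e12 e21 e22]; ring.
Qed.

Lemma is_deriveM2_Umat (eps m : R) (h h1 h2 : R -> R) (t dh dh1 dh2 : R) :
  is_derive h t dh -> is_derive h1 t dh1 -> is_derive h2 t dh2 ->
  is_deriveM2 (fun s => Umat eps m (h s) (h1 s) (h2 s)) t (Umat_dot eps m (h t) dh dh1 dh2).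
Proof.
  intros Hh Hh1 Hh2.
  assert (Dh : Derive (fun x : R => h x) t = dh) by exact (is_derive_unique _ _ _ Hh).
  assert (Dh1 : Derive (fun x : R => h1 x) t = dh1) by exact (is_derive_unique _ _ _ Hh1).
  assert (Dh2 : Derive (fun x : R => h2 x) t = dh2) by exact (is_derive_unique _ _ _ Hh2).
  split; [| split; [| split]]; split; simpl; auto_derive;
    try (repeat split; eexists; eassumption);
    rewrite ?Dh, ?Dh1, ?Dh2; field.
Qed.

Lemma in_I_between (a b : Rbar) (s t x : R) :
  in_I a b s -> in_I a b t -> Rmin s t <= x <= Rmax s t -> in_I a b x.
Proof.
  intros [Has Hsb] [Hat Htb] [Hlo Hhi]. split.
  - destruct a as [r| |]; simpl in *; auto.
    apply Rlt_le_trans with (Rmin s t); auto. now apply Rmin_glb_lt.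
  - destruct b as [r| |]; simpl in *; auto.
    apply Rle_lt_trans with (Rmax s t); auto. now apply Rmax_lub_lt.
Qed.

Lemma is_derive_zero_const (a b : Rbar) (g : R -> R) :
  (forall x, in_I a b x -> is_derive g x 0) ->
  forall s t, in_I a b s -> in_I a b t -> g s = g t.
Proof.
  intros Hd s t Hs Ht.
  assert (Hbetween : forall x, Rmin s t <= x <= Rmax s t -> is_derive g x 0)
    by (intros x Hx; apply Hd, (in_I_between a b s t); auto).
  destruct (MVT_gen g s t (fun _ => 0)) as [c [_ Hc]].
  - intros x Hx. apply Hbetween; lra.
  - intros x Hx.
    apply continuity_pt_filterlim, (@ex_derive_continuous R_AbsRing R_NormedModule).
    exists 0. now apply Hbetween.
  - lra.
Qed.

Lemma is_deriveM2_zero_const (a b : Rbar) (X : R -> M2) :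
  (forall x, in_I a b x -> is_deriveM2 X x M2zero) ->
  forall s t, in_I a b s -> in_I a b t -> X s = X t.
Proof.
  intros Hd s t Hs Ht.
  assert (Hentry : forall e : M2 -> C,
    (forall x, in_I a b x -> is_deriveC (fun u => e (X u)) x 0) -> e (X s) = e (X t)).
  { intros e He. apply injective_projections.
    - apply (is_derive_zero_const a b (fun u => fst (e (X u)))); auto.
      intros x Hx; apply He, Hx.
    - apply (is_derive_zero_const a b (fun u => snd (e (X u)))); auto.
      intros x Hx; apply He, Hx. }
  pose proof (Hentry e11 (fun x Hx => proj1 (Hd x Hx))) as H11.
  pose proof (Hentry e12 (fun x Hx => proj1 (proj2 (Hd x Hx)))) as H12.
  pose proof (Hentry e21 (fun x Hx => proj1 (proj2 (proj2 (Hd x Hx))))) as H21.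
  pose proof (Hentry e22 (fun x Hx => proj2 (proj2 (proj2 (Hd x Hx))))) as H22.
  destruct (X s), (X t); simpl in *; congruence.
Qed.

Lemma is_derive_const_on_eq0 (a b : Rbar) (f : R -> R) (c t l : R) :
  (forall s, in_I a b s -> f s = c) -> in_I a b t -> is_derive f t l -> l = 0.
Proof.
  intros Hc [Hat Htb] Hd.
  assert (Hloc : locally t (fun s => c = f s)).
  { apply (locally_interval _ t a b); auto.
    intros y Hay Hyb. symmetry. apply Hc. now split. }
  rewrite <- (is_derive_unique _ _ _ Hd).
  apply is_derive_unique, (is_derive_ext_loc (fun _ => c)).
  - exact Hloc.
  - exact (is_derive_const c t).
Qed.

Lemma det1_tr_adj_derive (a b : Rbar) (X : R -> M2) (t : R) (dX : M2) :
  (forall s, in_I a b s -> M2det (X s) = 1) -> in_I a b t -> is_deriveM2 X t dX ->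
  M2tr (M2mul (adjM (X t)) dX) = 0.
Proof.
  intros Hdet Ht HdX.
  destruct (is_deriveC_det X t dX HdX) as [Hre Him].
  apply injective_projections; simpl.
  - apply (is_derive_const_on_eq0 a b (fun s => fst (M2det (X s))) 1 t); auto.
    intros s Hs. now rewrite Hdet.
  - apply (is_derive_const_on_eq0 a b (fun s => snd (M2det (X s))) 0 t); auto.
    intros s Hs. now rewrite Hdet.
Qed.

Lemma lax_flow_conj_const (eps m : R) (a b : Rbar) (X : R -> M2) (h h1 h2 w : R -> R) :
  eps = 1 \/ eps = -1 ->
  (forall t, in_I a b t ->
     is_deriveM2 X t (M2mul (X t) (Wmat eps m (h t) (w t))) /\
     is_derive h t (h1 t * w t) /\ is_derive h1 t (h2 t * w t) /\
     is_derive h2 t (12 * h t * h1 t * w t)) ->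
  forall s t, in_I a b s -> in_I a b t ->
    M2mul (M2mul (X s) (Umat eps m (h s) (h1 s) (h2 s))) (adjM (X s)) =
    M2mul (M2mul (X t) (Umat eps m (h t) (h1 t) (h2 t))) (adjM (X t)).
Proof.
  intros Heps Hflow.
  apply is_deriveM2_zero_const. intros t Ht.
  destruct (Hflow t Ht) as (HX & Hh & Hh1 & Hh2).
  eapply is_deriveM2_eq.
  - apply is_deriveM2_mul; [apply is_deriveM2_mul | apply is_deriveM2_adj]; try exact HX.
    apply is_deriveM2_Umat; eassumption.
  - rewrite Umat_dot_lax by exact Heps.
    apply conj_derivative_lax, injective_projections; simpl; ring.
Qed.

Lemma smooth_on_is_derive (a b : Rbar) (f : R -> R) (t : R) :
  smooth_on a b f -> in_I a b t -> is_derive f t (Derive f t).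
Proof. intros Hf Ht. exact (Derive_correct _ _ (Hf O t Ht)). Qed.

Lemma smooth_M2_on_is_deriveM2 (a b : Rbar) (X : R -> M2) (t : R) :
  smooth_M2_on a b X -> in_I a b t -> is_deriveM2 X t (DeriveM2 X t).
Proof.
  intros (H1 & H2 & H3 & H4 & H5 & H6 & H7 & H8) Ht.
  repeat match goal with
         | H : smooth_on _ _ _ |- _ => apply (smooth_on_is_derive _ _ _ t) in H; [| exact Ht]
         end.
  split; [| split; [| split]]; split; assumption.
Qed.

Lemma Wmat_of_structure_eqs (eps m h : R) (W : M2) :
  fst (e11 W) = 0 -> snd (e11 W) = 0 -> M2tr W = 0 ->
  fst (e12 W) - eps * snd (e21 W) = 0 -> snd (e12 W) = 0 ->
  fst (e21 W) - (2 * eps * h + m / 3) * snd (e21 W) = 0 ->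
  W = Wmat eps m h (snd (e21 W)).
Proof.
  destruct W as [[a11 b11] [a12 b12] [a21 b21] [a22 b22]]; unfold M2tr; simpl.
  intros H11 K11 Htr H12 K12 H21. injection Htr; intros.
  unfold Wmat; f_equal; apply injective_projections; simpl; lra.
Qed.

Lemma integral_curve_det1 (eps m : R) (a b : Rbar) (A : R -> M2) (h h1 h2 : R -> R) :
  integral_curve eps m a b A h h1 h2 -> forall t, in_I a b t -> M2det (A t) = 1.
Proof. intros (_ & _ & _ & _ & Hsys) t Ht. apply (Hsys t Ht). Qed.

Lemma integral_curve_lax_flow (eps m : R) (a b : Rbar) (A : R -> M2) (h h1 h2 : R -> R) :
  integral_curve eps m a b A h h1 h2 ->
  forall t, in_I a b t ->
    let w := snd (e21 (MC A t)) in
    is_deriveM2 A t (M2mul (A t) (Wmat eps m (h t) w)) /\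
    is_derive h t (h1 t * w) /\ is_derive h1 t (h2 t * w) /\
    is_derive h2 t (12 * h t * h1 t * w).
Proof.
  intros Hcurve t Ht w.
  pose proof (integral_curve_det1 _ _ _ _ _ _ _ _ Hcurve) as Hdet.
  destruct Hcurve as (HA & Hh & Hh1 & Hh2 & Hsys).
  destruct (Hsys t Ht) as (_ & B11 & B12 & A11 & A12 & A21 & Dh & Dh1 & Dh2 & _).
  pose proof (smooth_M2_on_is_deriveM2 a b A t HA Ht) as HdA.
  assert (HMC : MC A t = M2mul (adjM (A t)) (DeriveM2 A t))
    by (unfold MC; now rewrite M2inv_det1 by auto).
  assert (Htr : M2tr (MC A t) = 0)
    by (rewrite HMC; exact (det1_tr_adj_derive a b A t _ Hdet Ht HdA)).
  split; [| split; [| split]].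
  - unfold w; rewrite <- (Wmat_of_structure_eqs eps m (h t) (MC A t)) by assumption.
    rewrite HMC, M2mul_adj_det1 by auto. exact HdA.
  - replace (h1 t * w) with (Derive h t) by (unfold w; lra).
    now apply (smooth_on_is_derive a b).
  - replace (h2 t * w) with (Derive h1 t) by (unfold w; lra).
    now apply (smooth_on_is_derive a b).
  - replace (12 * h t * h1 t * w) with (Derive h2 t) by (unfold w; lra).
    now apply (smooth_on_is_derive a b).
Qed.

Theorem corollary3p4 (eps m : R) (Heps : eps = 1 \/ eps = -1)
    (a b : Rbar) (Hab : Rbar_lt a b)
    (A : R -> M2) (h h1 h2 : R -> R) :
  integral_curve eps m a b A h h1 h2 ->
  forall s t, in_I a b s -> in_I a b t ->
    Phi eps m (A s) (h s) (h1 s) (h2 s) = Phi eps m (A t) (h t) (h1 t) (h2 t).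
Proof.
  intros Hcurve s t Hs Ht.
  unfold Phi.
  rewrite !M2inv_det1 by (eapply integral_curve_det1; eauto).
  apply (lax_flow_conj_const eps m a b A h h1 h2 (fun x => snd (e21 (MC A x)))); auto.
  intros x Hx. exact (integral_curve_lax_flow eps m a b A h h1 h2 Hcurve x Hx).
Qed.
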